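(* Let $(\alpha,\beta)\in\Delta_K$, $(\alpha_n,\beta_n)=T^n(\alpha,\beta)$, $\varepsilon_n=\varepsilon(\alpha_n,\beta_n)$, and $n\ge0$. Then the dual substitution $\Theta_{\varepsilon_n}$ satisfies: (1) if $(\bar{\bar x},i^* )\in\mathscr S(\bar{\bar\nu}(\alpha_{n+1},\beta_{n+1}))$, then every unit square occurring in $\Theta_{\varepsilon_n}(\bar{\bar x},i^* )$ belongs to $\mathscr S(\bar{\bar\nu}(\alpha_n,\beta_n))$, so $\Theta_{\varepsilon_n}(\bar{\bar x},i^* )\in\mathcal G(\bar{\bar\nu}(\alpha_n,\beta_n))$; (2) two distinct unit squares of $\mathscr S(\bar{\bar\nu}(\alpha_{n+1},\beta_{n+1}))$ are sent to images having no unit square in common (i.e. disjoint except for their boundaries); (3) for every $(\bar{\bar z},k^* )\in\mathscr S(\bar{\bar\nu}(\alpha_n,\beta_n))$ there exists $(\bar{\bar x},i^* )\in\mathscr S(\bar{\bar\nu}(\alpha_{n+1},\beta_{n+1}))$ such that $\Theta_{\varepsilon_n}(\bar{\bar x},i^* )\succ(\bar{\bar z},k^* )$, i.e. $(\bar{\bar z},k^* )$ is one of the unit squares of $\Theta_{\varepsilon_n}(\bar{\bar x},i^* )$.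
   Context: Let $K\subset\mathbb{R}$ be a real cubic number field, $N=N_{K/\mathbb{Q}}$ its norm. Fix $r=p/q$ with $p,q$ positive coprime integers and $3\nmid p$. Let $\Delta_K=\{(\alpha,\beta)\in K^2:\ 1,\alpha,\beta \text{ linearly independent over }\mathbb{Q},\ \alpha,\beta>0,\ \alpha+\beta<1\}$ and $Ind=\{(i,j): i,j\in\{0,1,2\},\ i\neq j\}$. Let $\Delta=\{(x,y)\in\mathbb{R}^2: x,y\ge 0,\ x+y\le 1\}$ and $\triangle(1,2)=\{(x,y)\in\Delta: x\ge y\}$, $\triangle(2,1)=\{x\le y\}$, $\triangle(0,1)=\{2x+y-1\le 0\}$, $\triangle(1,0)=\{2x+y-1\ge 0\}$, $\triangle(0,2)=\{x+2y-1\le0\}$, $\triangle(2,0)=\{x+2y-1\ge 0\}$ (all subsets of $\Delta$). Maps $T_{(i,j)}:\triangle(i,j)\to\Delta$: $T_{(1,2)}(x,y)=(\frac{x-y}{1-y},\frac{y}{1-y})$, $T_{(2,1)}(x,y)=(\frac{x}{1-x},\frac{y-x}{1-x})$, $T_{(0,1)}(x,y)=(\frac{x}{1-x},\frac{y}{1-x})$, $T_{(1,0)}(x,y)=(\frac{2x+y-1}{x+y},\frac{y}{x+y})$, $T_{(0,2)}(x,y)=(\frac{x}{1-y},\frac{y}{1-y})$, $T_{(2,0)}(x,y)=(\frac{x}{x+y},\frac{x+2y-1}{x+y})$. For $(\alpha,\beta)\in\Delta_K$ put $\gamma=1-\alpha-\beta$ and $v_{\{1,2\}}=\frac{\alpha^r\beta^r}{|N(\alpha)N(\beta)|}$,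 $v_{\{0,1\}}=\frac{\alpha^r\gamma^r}{|N(\alpha)N(\gamma)|}$, $v_{\{0,2\}}=\frac{\beta^r\gamma^r}{|N(\beta)N(\gamma)|}$; the maximum is attained at a unique pair $\{i_0,j_0\}$. $\varepsilon(\alpha,\beta)$ is the ordered pair $(i,j)\in Ind$ with $\{i,j\}=\{i_0,j_0\}$ and $(\alpha,\beta)\in\triangle(i,j)$, and $T(\alpha,\beta)=T_{\varepsilon(\alpha,\beta)}(\alpha,\beta)$ (a map $\Delta_K\to\Delta_K$). For $(i,j)\in Ind$, $M_{(i,j)}=(m_{k\ell})_{0\le k,\ell\le2}$ with $m_{k\ell}=1$ if $k=\ell$ or $(k,\ell)=(i,j)$, and $0$ otherwise; $L_{(i,j)}:=M_{(j,i)}$. For $(\alpha,\beta)\in\Delta_K$, $\bar{\bar\nu}(\alpha,\beta)={}^t(1-\alpha-\beta,\alpha,\beta)$. Let $\bar{\bar e}_0,\bar{\bar e}_1,\bar{\bar e}_2$ be the standard basis of $\mathbb{R}^3$. A unit square $(\bar{\bar x},i^* )$ ($\bar{\bar x}\in\mathbb{Z}^3$, $i\in\{0,1,2\}$) is the set $\{\bar{\bar x}+t\bar{\bar e}_j+u\bar{\bar e}_k: t,u\in[0,1]\}$ with $\{i,j,k\}=\{0,1,2\}$. For $\bar{\bar a}\in\mathbb{R}^3_{>0}$ with $\mathbb{Q}$-linearly independent coordinates, the stepped surface is $\mathscr S(\bar{\bar a})=\{(\bar{\bar x},i^* ): \bar{\bar x}\in\mathbb{Z}^3, i\in\{0,1,2\},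 \langle\bar{\bar x},\bar{\bar a}\rangle>0,\ \langle\bar{\bar x}-\bar{\bar e}_i,\bar{\bar a}\rangle\le0\}$, and $\mathcal G(\bar{\bar a})$ is the free $\mathbb{Z}$-module of finite formal sums of elements of $\mathscr S(\bar{\bar a})$. A sum with all coefficients $1$ (a patch) is identified with its finite set of squares; for patches $\gamma,\delta$, $\gamma\prec\delta$ (equivalently $\delta\succ\gamma$) means the set of squares of $\gamma$ is contained in that of $\delta$. For $(i,j)\in Ind$ the dual substitution $\Theta_{(i,j)}$ is defined on unit squares by $\Theta_{(i,j)}(\bar{\bar x},j^* )=(L_{(i,j)}^{-1}(\bar{\bar x}+\bar{\bar e}_i),i^* )+(L_{(i,j)}^{-1}\bar{\bar x},j^* )$ and $\Theta_{(i,j)}(\bar{\bar x},k^* )=(L_{(i,j)}^{-1}\bar{\bar x},k^* )$ for $k\neq j$, and extended additively to formal sums. *)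

From HB Require Import structures.
From mathcomp Require Import all_boot all_order all_algebra.
From mathcomp Require Import boolp classical_sets reals exp.
From mathcomp Require Import Rstruct.
From Stdlib Require Import Rdefinitions.

Set Implicit Arguments.
Unset Strict Implicit.
Unset Printing Implicit Defensive.
Import Order.TTheory GRing.Theory Num.Theory.
Local Open Scope ring_scope.

Notation RR := Rdefinitions.R.

Definition is_Qbasis3 (K : set RR) (b : 'I_3 -> RR) : Prop :=
  (forall i, K (b i)) /\
  (forall c : 'I_3 -> rat, \sum_i ratr (c i) * b i = 0 -> forall i, c i = 0) /\
  (forall x, K x -> exists c : 'I_3 -> rat, x = \sum_i ratr (c i) * b i).

Definition real_cubic_field (K : set RR) : Prop :=
  K 1 /\
  (forall x y, K x -> K y -> K (x + y)) /\
  (forall x, K x -> K (- x)) /\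
  (forall x y, K x -> K y -> K (x * y)) /\
  (forall x, K x -> x != 0 -> K x^-1) /\
  exists b, is_Qbasis3 K b.

Definition mult_matrix (b : 'I_3 -> RR) (x : RR) (M : 'M[rat]_3) : Prop :=
  forall i, x * b i = \sum_j ratr (M i j) * b j.

(* N_{K/Q}(x) = det of the Q-linear map "multiplication by x" on K
   (independent of the chosen basis). *)
Definition normK (K : set RR) (x : RR) : RR :=
  ratr (\det (xget 0 [set M | exists b, is_Qbasis3 K b /\ mult_matrix b x M])).

Definition in_DeltaK (K : set RR) (a b : RR) : Prop :=
  K a /\ K b /\
  (forall c0 c1 c2 : rat, ratr c0 + ratr c1 * a + ratr c2 * b = 0 ->
     [/\ c0 = 0, c1 = 0 & c2 = 0]) /\
  0 < a /\ 0 < b /\ a + b < 1.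

Definition i0 : 'I_3 := @Ordinal 3 0 isT.
Definition i1 : 'I_3 := @Ordinal 3 1 isT.
Definition i2 : 'I_3 := @Ordinal 3 2 isT.

(* The pair {i0,j0} maximizing v is unique on Delta_K (paper); ties are broken
   arbitrarily here, which is irrelevant on Delta_K.  The order (i,j) is chosen
   by membership in the closed triangle triangle(i,j); on Delta_K the point never
   lies on the separating lines (1, alpha, beta are Q-independent). *)
Definition eps (K : set RR) (r : RR) (p : RR * RR) : 'I_3 * 'I_3 :=
  let a := p.1 in let b := p.2 in let g := 1 - a - b in
  let v12 := a `^ r * b `^ r / `|normK K a * normK K b| in
  let v01 := a `^ r * g `^ r / `|normK K a * normK K g| in
  let v02 := b `^ r * g `^ r / `|normK K b * normK K g| in
  if (v01 <= v12) && (v02 <= v12) then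
    (if b <= a then (i1, i2) else (i2, i1))
  else if v02 <= v01 then
    (if 2 * a + b - 1 <= 0 then (i0, i1) else (i1, i0))
  else
    (if a + 2 * b - 1 <= 0 then (i0, i2) else (i2, i0)).

Definition Tmap (e : 'I_3 * 'I_3) (p : RR * RR) : RR * RR :=
  let x := p.1 in let y := p.2 in
  match nat_of_ord e.1, nat_of_ord e.2 with
  | 1%N, 2%N => ((x - y) / (1 - y), y / (1 - y))
  | 2%N, 1%N => (x / (1 - x), (y - x) / (1 - x))
  | 0%N, 1%N => (x / (1 - x), y / (1 - x))
  | 1%N, 0%N => ((2 * x + y - 1) / (x + y), y / (x + y))
  | 0%N, 2%N => (x / (1 - y), y / (1 - y))
  | 2%N, 0%N => (x / (x + y), (x + 2 * y - 1) / (x + y))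
  | _, _ => p
  end.

Definition T (K : set RR) (r : RR) (p : RR * RR) : RR * RR := Tmap (eps K r p) p.

Definition nu (p : RR * RR) : 'cV[RR]_3 :=
  \col_k (if k == i0 then 1 - p.1 - p.2 else if k == i1 then p.1 else p.2).

Definition square := ('cV[int]_3 * 'I_3)%type.

Definition ebase (i : 'I_3) : 'cV[int]_3 := \col_k (k == i)%:R.

Definition pairing (x : 'cV[int]_3) (a : 'cV[RR]_3) : RR :=
  \sum_k (x k 0)%:~R * a k 0.

Definition stepped (a : 'cV[RR]_3) (s : square) : Prop :=
  0 < pairing s.1 a /\ pairing (s.1 - ebase s.2) a <= 0.

Definition Mmat (i j : 'I_3) : 'M[int]_3 :=
  \matrix_(k, l) ((k == l) || ((k == i) && (l == j)))%:R.

Definition Lmat (i j : 'I_3) : 'M[int]_3 := Mmat j i.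

(* Theta_{(i,j)} as the list of unit squares of the (coefficient-1) formal sum *)
Definition Theta (e : 'I_3 * 'I_3) (s : square) : seq square :=
  let i := e.1 in let j := e.2 in
  let Li := invmx (Lmat i j) in
  if s.2 == j then [:: (Li *m (s.1 + ebase i), i); (Li *m s.1, j)]
  else [:: (Li *m s.1, s.2)].

(* Write L := L_{(i,j)} for the pair chosen at step n.  One step of the
   algorithm is projective multiplication by the transpose of L: there is
   c > 0 with nu_n = c * tL nu_{n+1}.  Hence <L^-1 y, nu_n> = c <y, nu_{n+1}>,
   so Theta_{(i,j)} transports the inequalities defining S(nu_{n+1}) into those
   defining S(nu_n); all three claims then reduce to comparing the coordinate
   nu_{n+1}(k) with the pairing of the square's corner.  The only property of
   the orbit that is needed is that nu_n has positive, Q-independent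
   coordinates, which is preserved by T. *)
From mathcomp Require Import all_boot all_order all_algebra.
From mathcomp Require Import boolp classical_sets reals exp Rstruct.
From mathcomp Require Import ring lra.
Import Order.TTheory GRing.Theory Num.Theory.
Local Open Scope ring_scope.
Set Implicit Arguments.
Unset Strict Implicit.

Lemma ord3P (k : 'I_3) : k = i0 \/ k = i1 \/ k = i2.
Proof. by case: k => [[|[|[|?]]] ?]; [left|right; left|right; right|]; try apply: val_inj. Qed.

Lemma sum_ord3 (V : nmodType) (F : 'I_3 -> V) : \sum_k F k = F i0 + F i1 + F i2.
Proof. by rewrite !big_ord_recr big_ord0 /= add0r; congr (F _ + F _ + F _); apply/val_inj. Qed.

Definition Linv (i j : 'I_3) : 'M[int]_3 :=
  \matrix_(k, l) ((k == l)%:R - ((k == j) && (l == i))%:R).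

Lemma mulmx_Lmat_Linv i j : i != j -> Lmat i j *m Linv i j = 1%:M.
Proof.
move=> hij; apply/matrixP => k l; rewrite !mxE sum_ord3 !mxE.
have [ei|[ei|ei]] := ord3P i; have [ej|[ej|ej]] := ord3P j; subst i j => //;
by have [->|[->|->]] := ord3P k; have [->|[->|->]] := ord3P l; rewrite ?mxE.
Qed.

Lemma mulmx_Linv_Lmat i j : i != j -> Linv i j *m Lmat i j = 1%:M.
Proof.
move=> hij; apply/matrixP => k l; rewrite !mxE sum_ord3 !mxE.
have [ei|[ei|ei]] := ord3P i; have [ej|[ej|ej]] := ord3P j; subst i j => //;
by have [->|[->|->]] := ord3P k; have [->|[->|->]] := ord3P l; rewrite ?mxE.
Qed.

Lemma invmx_Lmat i j : i != j -> invmx (Lmat i j) = Linv i j.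
Proof.
move=> hij; have [L_unit _] := mulmx1_unit (mulmx_Lmat_Linv hij).
by rewrite -[invmx _]mulmx1 -(mulmx_Lmat_Linv hij) (mulKmx L_unit).
Qed.

Lemma Linv_inj i j : i != j -> injective (mulmx (Linv i j) : 'cV[int]_3 -> 'cV_3).
Proof.
by move=> hij x y /(congr1 (mulmx (Lmat i j))); rewrite !mulmxA mulmx_Lmat_Linv // !mul1mx.
Qed.

Lemma pairingD x y a : pairing (x + y) a = pairing x a + pairing y a.
Proof. by rewrite /pairing -big_split; apply: eq_bigr => k _; rewrite !mxE intrD mulrDl. Qed.

Lemma pairingB x y a : pairing (x - y) a = pairing x a - pairing y a.
Proof. by rewrite /pairing -sumrB; apply: eq_bigr => k _; rewrite !mxE intrB mulrBl. Qed.

Lemma pairing_ebase i a : pairing (ebase i) a = a i 0.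
Proof. by rewrite /pairing sum_ord3 !mxE; have [->|[->|->]] := ord3P i => /=; ring. Qed.

Lemma steppedE a x k : stepped a (x, k) <-> 0 < pairing x a /\ pairing x a <= a k 0.
Proof. by rewrite /stepped /= pairingB pairing_ebase subr_le0. Qed.

(* Coordinatewise form of nu = c * tL_{(i,j)} nu'. *)
Definition tL_scaled (i j : 'I_3) (c : RR) (nu nu' : 'cV[RR]_3) :=
  forall k, nu k 0 = c * (nu' k 0 + (k == i)%:R * nu' j 0).

Lemma pairing_Linv i j c nu nu' y : i != j -> tL_scaled i j c nu nu' ->
  pairing (Linv i j *m y) nu = c * pairing y nu'.
Proof.
move=> hij H; rewrite /pairing !sum_ord3 !mxE !sum_ord3 !mxE !H.
have [ei|[ei|ei]] := ord3P i; have [ej|[ej|ej]] := ord3P j; subst i j => //=;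
by rewrite ?intrD ?intrB ?intrM /=; ring.
Qed.

Section DualSubstitution.

Variables (e : 'I_3 * 'I_3) (c : RR) (nu nu' : 'cV[RR]_3).
Local Notation i := e.1.
Local Notation j := e.2.
Hypotheses (hij : i != j) (c_gt0 : 0 < c) (nu'_gt0 : forall k, 0 < nu' k 0).
Hypothesis nuE : tL_scaled i j c nu nu'.

Let L' := Linv i j.

Lemma nu_j : nu j 0 = c * nu' j 0.
Proof. by rewrite nuE eq_sym (negbTE hij) mul0r addr0. Qed.

Lemma nu_i : nu i 0 = c * (nu' i 0 + nu' j 0).
Proof. by rewrite nuE eqxx mul1r. Qed.

Lemma nu_neq_i k : k != i -> nu k 0 = c * nu' k 0.
Proof. by move=> hk; rewrite nuE (negbTE hk) mul0r addr0. Qed.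

Lemma nu_ge k : c * nu' k 0 <= nu k 0.
Proof.
have [->|hk] := eqVneq k i; last by rewrite nu_neq_i.
by rewrite nu_i ler_pM2l // lerDl ltW.
Qed.

Lemma pairing_L' y : pairing (L' *m y) nu = c * pairing y nu'.
Proof. exact: pairing_Linv. Qed.

Lemma mem_Theta x k t : t \in Theta e (x, k) <->
  t = (L' *m x, k) \/ (k = j /\ t = (L' *m (x + ebase i), i)).
Proof.
rewrite /Theta /= invmx_Lmat //; case: (eqVneq k j) => [->|nkj]; rewrite !inE.
  by split=> [/orP[]/eqP|[|[_]]] ->; rewrite ?eqxx ?orbT; auto.
split=> [/eqP ->|[->|[ekj _]]]; [by left | by [] | by rewrite ekj eqxx in nkj].
Qed.

Lemma Theta_stepped s : stepped nu' s -> forall t, t \in Theta e s -> stepped nu t.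
Proof.
case: s => x k /steppedE [x_gt0 x_le] t /mem_Theta [->|[ekj ->]]; apply/steppedE.
  rewrite pairing_L' pmulr_rgt0 //; split=> //.
  by apply: le_trans (nu_ge k); rewrite ler_pM2l.
rewrite pairing_L' pairingD pairing_ebase nu_i; subst k.
by split; [rewrite mulr_gt0 // addr_gt0 | rewrite ler_pM2l //; lra].
Qed.

Lemma Theta_disjoint s1 s2 : stepped nu' s1 -> stepped nu' s2 -> s1 <> s2 ->
  forall t, ~ (t \in Theta e s1 /\ t \in Theta e s2).
Proof.
case: s1 s2 => x1 k1 [x2 k2] /steppedE [a_gt0 a_le] /steppedE [b_gt0 b_le] neq t.
have inj := Linv_inj hij.
case=> /mem_Theta [T1|[ek1 T1]] /mem_Theta [T2|[ek2 T2]]; rewrite T1 in T2;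
  case/pair_equal_spec: T2 => /inj E ek; subst.
- by apply: neq.
- by move: a_le b_gt0; rewrite pairingD pairing_ebase; lra.
- by move: b_le a_gt0; rewrite pairingD pairing_ebase; lra.
- by apply: neq; move/addIr: E => ->.
Qed.

(* The preimage of (z, k) is (L z, k), except when k = i and (L z, i) falls
   outside S(nu'): then it is (L z - e_i, j). *)
Lemma Theta_cover t : stepped nu t -> exists s, stepped nu' s /\ t \in Theta e s.
Proof.
case: t => z k /steppedE [z_gt0 z_le].
set x := Lmat i j *m z.
have zE : L' *m x = z by rewrite /x mulmxA mulmx_Linv_Lmat // mul1mx.
have Pz : pairing z nu = c * pairing x nu' by rewrite -zE pairing_L'.
rewrite Pz pmulr_rgt0 // in z_gt0; rewrite Pz in z_le.
have [eki|nki] := eqVneq k i.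
  subst k; have [x_le|x_gt] := lerP (pairing x nu') (nu' i 0).
    by exists (x, i); split; [apply/steppedE | apply/mem_Theta; left; rewrite zE].
  exists (x - ebase i, j); split; last by apply/mem_Theta; right; rewrite subrK zE.
  apply/steppedE; rewrite pairingB pairing_ebase; split; first by rewrite subr_gt0.
  by move: z_le; rewrite nu_i ler_pM2l //; lra.
exists (x, k); split; last by apply/mem_Theta; left; rewrite zE.
by apply/steppedE; split=> //; rewrite -(ler_pM2l c_gt0) -nu_neq_i.
Qed.

End DualSubstitution.

Definition rat_independent (v : 'cV[RR]_3) :=
  forall d : 'I_3 -> rat, \sum_k ratr (d k) * v k 0 = 0 -> forall k, d k = 0.

Definition admissible (p : RR * RR) := (forall k, 0 < nu p k 0) /\ rat_independent (nu p).

Lemma nu_i0 x y : nu (x, y) i0 0 = 1 - x - y. Proof. by rewrite mxE. Qed.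
Lemma nu_i1 x y : nu (x, y) i1 0 = x. Proof. by rewrite mxE. Qed.
Lemma nu_i2 x y : nu (x, y) i2 0 = y. Proof. by rewrite mxE. Qed.

Lemma rat_independent_neq v k l : rat_independent v -> k != l -> v k 0 != v l 0.
Proof.
move=> hv hkl; apply/eqP => E.
pose d m : rat := (m == k)%:R - (m == l)%:R.
suff /hv/(_ k) : \sum_m ratr (d m) * v m 0 = 0 by rewrite /d eqxx (negbTE hkl) subr0.
move: E hkl; rewrite sum_ord3 /d.
have [->|[->|->]] := ord3P k; have [->|[->|->]] := ord3P l => //= E _;
by rewrite !(rmorphB, rmorph0, rmorph1) E; ring.
Qed.

Lemma tL_scaled_rat_independent i j c nu nu' : i != j ->
  tL_scaled i j c nu nu' -> rat_independent nu -> rat_independent nu'.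
Proof.
move=> hij H hv d hd.
pose d' m := d m - (m == j)%:R * d i.
have : \sum_k ratr (d' k) * nu k 0 = c * \sum_k ratr (d k) * nu' k 0.
  rewrite !sum_ord3 /d' !H.
  have [ei|[ei|ei]] := ord3P i; have [ej|[ej|ej]] := ord3P j; subst i j => //=;
  by rewrite !(rmorphB, rmorphM, rmorph0, rmorph1) /=; ring.
rewrite hd mulr0 => /hv d'0.
have di : d i = 0 by have := d'0 i; rewrite /d' (negbTE hij) mul0r subr0.
by move=> k; have := d'0 k; rewrite /d' di mulr0 subr0.
Qed.

Lemma tL_scaled_gt0 i j c nu nu' : i != j -> 0 < c -> tL_scaled i j c nu nu' ->
  (forall k, 0 < nu k 0) -> nu j 0 < nu i 0 -> forall k, 0 < nu' k 0.
Proof.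
move=> hij c_gt0 H nu_gt0 nu_ji k.
have [->|hk] := eqVneq k i.
  rewrite -(pmulr_rgt0 _ c_gt0); move: nu_ji.
  by rewrite (nu_i (e := (i, j)) H) (nu_j (e := (i, j)) hij H); lra.
by have := nu_gt0 k; rewrite (nu_neq_i (e := (i, j)) H hk) pmulr_rgt0.
Qed.

(* The order of (i, j) = eps p puts nu p strictly on the side nu_j < nu_i;
   strictness holds because the coordinates of nu p are pairwise distinct. *)
Lemma eps_tL_scaled K r p : admissible p ->
  let e := eps K r p in
  [/\ e.1 != e.2, nu p e.2 0 < nu p e.1 0 &
      exists2 c, 0 < c & tL_scaled e.1 e.2 c (nu p) (nu (Tmap e p))].
Proof.
case: p => a b [nu_gt0 hv] /=.
have := nu_gt0 i0; have := nu_gt0 i1; have := nu_gt0 i2.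
rewrite nu_i0 nu_i1 nu_i2 => b_gt0 a_gt0 g_gt0.
have := rat_independent_neq hv (isT : i1 != i2).
have := rat_independent_neq hv (isT : i1 != i0).
have := rat_independent_neq hv (isT : i2 != i0).
rewrite nu_i0 nu_i1 nu_i2 => nbg nag nab.
rewrite /eps /tL_scaled /=.
case: ifP => _; [case: ifP => h | case: ifP => _; case: ifP => h]; rewrite /Tmap /=;
  rewrite ?nu_i0 ?nu_i1 ?nu_i2; split=> //.
- by rewrite lt_neqAle eq_sym nab h.
- exists (1 - b); first lra.
  by move=> k; have [->|[->|->]] := ord3P k; rewrite !mxE /=; field; apply/eqP => ?; lra.
- by rewrite ltNge h.
- exists (1 - a); first lra.
  by move=> k; have [->|[->|->]] := ord3P k; rewrite !mxE /=; field; apply/eqP => ?; lra.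
- by rewrite lt_neqAle nag /=; lra.
- exists (1 - a); first lra.
  by move=> k; have [->|[->|->]] := ord3P k; rewrite !mxE /=; field; apply/eqP => ?; lra.
- by move/negbT: h; rewrite -ltNge; lra.
- exists (a + b); first lra.
  by move=> k; have [->|[->|->]] := ord3P k; rewrite !mxE /=; field; apply/eqP => ?; lra.
- by rewrite lt_neqAle nbg /=; lra.
- exists (1 - b); first lra.
  by move=> k; have [->|[->|->]] := ord3P k; rewrite !mxE /=; field; apply/eqP => ?; lra.
- by move/negbT: h; rewrite -ltNge; lra.
- exists (a + b); first lra.
  by move=> k; have [->|[->|->]] := ord3P k; rewrite !mxE /=; field; apply/eqP => ?; lra.
Qed.

Lemma admissible_T K r p : admissible p -> admissible (T K r p).
Proof.
move=> hp; have [hij nu_ji [c c_gt0 H]] := eps_tL_scaled K r hp.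
case: hp => nu_gt0 hv; split.
  exact: tL_scaled_gt0 hij c_gt0 H nu_gt0 nu_ji.
exact: tL_scaled_rat_independent hij H hv.
Qed.

Lemma DeltaK_admissible K a b : in_DeltaK K a b -> admissible (a, b).
Proof.
case=> _ [_ [hind [a_gt0 [b_gt0 ab_lt1]]]]; split.
  by move=> k; have [->|[->|->]] := ord3P k; rewrite ?nu_i0 ?nu_i1 ?nu_i2 //; lra.
move=> d; rewrite sum_ord3 nu_i0 nu_i1 nu_i2 => hd.
have [|d0 d10 d20] := hind (d i0) (d i1 - d i0) (d i2 - d i0).
  by rewrite !rmorphB /= -hd; ring.
move: d10 d20; rewrite d0 !subr0 => d1 d2.
by move=> k; have [->|[->|->]] := ord3P k.
Qed.

Unset Implicit Arguments.
Set Strict Implicit.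

(* The hypotheses on K, p and q only make the maximum in eps unique; the
   statement holds for any tie-breaking. *)
Theorem theorem5p5 (K : set RR) (hK : real_cubic_field K)
  (p q : nat) (hp : (0 < p)%N) (hq : (0 < q)%N) (hpq : coprime p q)
  (h3 : ~~ (3 %| p)%N)
  (alpha beta : RR) (hab : in_DeltaK K alpha beta) (n : nat) :
  let r : RR := p%:R / q%:R in
  let pn := iter n (T K r) (alpha, beta) in
  let pn1 := iter n.+1 (T K r) (alpha, beta) in
  let e := eps K r pn in
  (* (1) *)
  (forall s : square, stepped (nu pn1) s ->
     forall t, t \in Theta e s -> stepped (nu pn) t) /\
  (* (2) *)
  (forall s1 s2 : square, stepped (nu pn1) s1 -> stepped (nu pn1) s2 -> s1 <> s2 ->
     forall t, ~ (t \in Theta e s1 /\ t \in Theta e s2)) /\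
  (* (3) *)
  (forall t : square, stepped (nu pn) t ->
     exists s : square, stepped (nu pn1) s /\ t \in Theta e s).
Proof.
move=> r pn pn1 e.
have adm_pn : admissible pn.
  rewrite /pn; elim: (n) => [|m IH] /=; first exact: DeltaK_admissible hab.
  exact: admissible_T.
have [hij _ [c c_gt0 H]] := eps_tL_scaled K r adm_pn.
have [nu1_gt0 _] := admissible_T K r adm_pn.
have pn1E : pn1 = Tmap e pn by rewrite /pn1 iterS.
rewrite pn1E; rewrite /T -/e in nu1_gt0; rewrite -/e in hij H.
split; [|split].
- exact: Theta_stepped hij c_gt0 nu1_gt0 H.
- exact: Theta_disjoint hij.
- exact: Theta_cover hij c_gt0 H.
Qed.
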